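(* Let $G$ be a modular noetherian right $\ell$-group with strong order unit $s$ and degree homomorphism $\deg$. Let $g \in G^-$. Let $g = g_k g_{k-1}\cdots g_1$ be its right-normal factorization and $g = h_1 \cdots h_{k-1} h_k$ its left-normal factorization. Then $\deg(h_i) = \deg(g_i)$ for all $1 \leq i \leq k$.
   Context: A right $\ell$-group is a group $G$ (identity $e$) with a right-invariant partial order making $G$ a lattice. It is modular if the lattice is modular. It is noetherian if for each $g$ the set $\{h \geq g\}$ satisfies the descending chain condition and the set $\{h \leq g\}$ satisfies the ascending chain condition. $G^- = \{g \leq e\}$ and $[a,b] = \{x : a \leq x \leq b\}$. A strong order unit is an element $s > e$ such that $x \mapsto sx$ is a lattice automorphism and every $g$ satisfies $g \leq s^k$ for some $k \in \mathbb{Z}$. $\deg : G \to \mathbb{Z}$ is the unique group homomorphism sending $g \in G^-$ to the common length of its factorizations into elements covered by $e$. A right-normal factorization of $g \in G^-$ is a sequence $g_1,\dots,g_k \in [s^{-1},e] \setminus \{e\}$ with $g = g_k\cdots g_1$ such that, for each $1 \leq i < k$, there are no $h,h' \in G^-$ with $h \neq e$, $h'h = g_{i+1}$, $hg_i \in [s^{-1},e]$. A left-normal factorization of $g$ is a sequence $h_1,\dots,h_k \in [s^{-1},e]\setminus\{e\}$ with $g = h_1\cdots h_k$ such that, for each $1 \leq i < k$, there are no $h,h' \in G^-$ with $h \neq e$, $hh' = h_{i+1}$, $h_i h \in [s^{-1},e]$. Each $g \in G^-$ has a unique right-normal and a unique left-normal factorization, and both have the same number of factors. *)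

From Stdlib Require Import ZArith List.
Import ListNotations.
Set Implicit Arguments.

Record rlgroup := RLGroup {
  carrier :> Type;
  mul : carrier -> carrier -> carrier;
  inv : carrier -> carrier;
  one : carrier;
  le : carrier -> carrier -> Prop;
  meet : carrier -> carrier -> carrier;
  join : carrier -> carrier -> carrier;
  mulA : forall x y z, mul x (mul y z) = mul (mul x y) z;
  mul1g : forall x, mul one x = x;
  mulg1 : forall x, mul x one = x;
  mulVg : forall x, mul (inv x) x = one;
  mulgV : forall x, mul x (inv x) = one;
  le_refl : forall x, le x x;
  le_antisym : forall x y, le x y -> le y x -> x = y;
  le_trans : forall x y z, le x y -> le y z -> le x z;
  meet_l : forall x y, le (meet x y) x;
  meet_r : forall x y, le (meet x y) y;
  meet_glb : forall x y z, le z x -> le z y -> le z (meet x y);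
  join_l : forall x y, le x (join x y);
  join_r : forall x y, le y (join x y);
  join_lub : forall x y z, le x z -> le y z -> le (join x y) z;
  le_mulr : forall x y z, le x y -> le (mul x z) (mul y z)
}.

Section Defs.
Variable G : rlgroup.

Notation "x * y" := (mul G x y).
Notation e := (one G).
Notation "x <= y" := (le G x y).

Definition modular : Prop :=
  forall x y z : G, x <= z -> join G x (meet G y z) = meet G (join G x y) z.

Definition noetherian : Prop :=
  forall g : G,
    (forall f : nat -> G, (forall n, g <= f n) -> (forall n, f (S n) <= f n) ->
       exists N, forall n, (N <= n)%nat -> f n = f N) /\
    (forall f : nat -> G, (forall n, f n <= g) -> (forall n, f n <= f (S n)) ->
       exists N, forall n, (N <= n)%nat -> f n = f N).

Definition zpow (x : G) (k : Z) : G :=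
  match k with
  | Z0 => e
  | Zpos p => Pos.iter (fun y => x * y) e p
  | Zneg p => inv G (Pos.iter (fun y => x * y) e p)
  end.

Definition strong_order_unit (s : G) : Prop :=
  (e <= s /\ s <> e) /\
  (forall x y : G, s * meet G x y = meet G (s * x) (s * y)) /\
  (forall x y : G, s * join G x y = join G (s * x) (s * y)) /\
  (forall g : G, exists k : Z, g <= zpow s k).

Definition negcone (g : G) : Prop := g <= e.

Definition covered_by_e (a : G) : Prop :=
  a <= e /\ a <> e /\ forall x : G, a <= x -> x <= e -> x = a \/ x = e.

Definition lprod (l : list G) : G := fold_right (fun a b => a * b) e l.

Definition is_degree (deg : G -> Z) : Prop :=
  (forall x y : G, deg (x * y) = (deg x + deg y)%Z) /\
  (forall l : list G, Forall covered_by_e l ->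
     deg (lprod l) = Z.of_nat (length l)).

Definition in_unit_interval (s x : G) : Prop := inv G s <= x /\ x <= e.

(** Right-normal factorization: gs = [g_1; ...; g_k], g = g_k * ... * g_1. *)
Definition right_normal (s g : G) (gs : list G) : Prop :=
  Forall (fun a => in_unit_interval s a /\ a <> e) gs /\
  g = lprod (rev gs) /\
  forall i : nat, (S i < length gs)%nat ->
    ~ exists h h' : G, negcone h /\ negcone h' /\ h <> e /\
        h' * h = nth (S i) gs e /\ in_unit_interval s (h * nth i gs e).

(** Left-normal factorization: hs = [h_1; ...; h_k], g = h_1 * ... * h_k. *)
Definition left_normal (s g : G) (hs : list G) : Prop :=
  Forall (fun a => in_unit_interval s a /\ a <> e) hs /\
  g = lprod hs /\
  forall i : nat, (S i < length hs)%nat ->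
    ~ exists h h' : G, negcone h /\ negcone h' /\ h <> e /\
        h * h' = nth (S i) hs e /\ in_unit_interval s (nth i hs e * h).

End Defs.
Arguments strong_order_unit {G} s.
Arguments negcone {G} g.
Arguments right_normal {G} s g gs.
Arguments left_normal {G} s g hs.
Arguments is_degree {G} deg.

From Stdlib Require Import ZArith List Lia Classical ClassicalEpsilon.
Import ListNotations.

(* Both factorizations are read off from lattice operations with powers of [s].
   For the right-normal form, [g ⊔ s⁻ʲ = g_j ⋯ g_1]: the head [g_1] is [g ⊔ s⁻¹], and
   [x ⊔ s⁻⁽ʲ⁺¹⁾ = (x (x ⊔ s⁻¹)⁻¹ ⊔ s⁻ʲ)(x ⊔ s⁻¹)] lets one peel it off. Inverting a
   left-normal form gives a right-normal form of [g⁻¹] for the reversed order, whence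
   [g⁻¹ ⊓ sʲ = (h_1 ⋯ h_j)⁻¹]. In a modular noetherian lattice [deg] is a valuation,
   [deg (x ⊓ y) + deg (x ⊔ y) = deg x + deg y], and since left multiplication by [sʲ] is
   a lattice automorphism this gives [deg (g ⊔ s⁻ʲ) = - deg (g⁻¹ ⊓ sʲ)]. So the prefixes
   [g_j ⋯ g_1] and [h_1 ⋯ h_j] have equal degrees for every [j], and hence so do the
   individual factors. *)

Definition dual_rlgroup (G : rlgroup) : rlgroup :=
  @RLGroup G (mul G) (inv G) (one G) (fun x y => le G y x) (join G) (meet G)
    (mulA G) (mul1g G) (mulg1 G) (mulVg G) (mulgV G) (le_refl G)
    (fun x y a b => le_antisym G x y b a)
    (fun x y z a b => le_trans G z y x b a)
    (join_l G) (join_r G) (join_lub G) (meet_l G) (meet_r G) (meet_glb G)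
    (fun x y z h => le_mulr G y x z h).

Arguments mulA {r} x y z. Arguments mul1g {r} x. Arguments mulg1 {r} x.
Arguments mulVg {r} x. Arguments mulgV {r} x. Arguments le_refl {r} x.
Arguments le_antisym {r} x y _ _. Arguments le_trans {r} x y z _ _.
Arguments meet_l {r} x y. Arguments meet_r {r} x y. Arguments meet_glb {r} x y z _ _.
Arguments join_l {r} x y. Arguments join_r {r} x y. Arguments join_lub {r} x y z _ _.
Arguments le_mulr {r} x y z _.

Local Notation "x ⋅ y" := (mul _ x y) (at level 40, left associativity).
Local Notation "x ⁻¹" := (inv _ x) (at level 2, left associativity, format "x ⁻¹").
Local Notation "x ≤ y" := (le _ x y) (at level 70, no associativity).
Local Notation "x ⊓ y" := (meet _ x y) (at level 50, left associativity).
Local Notation "x ⊔ y" := (join _ x y) (at level 50, left associativity).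

Section Power.
Variable G : rlgroup.
(* [G] stays outside the fixpoint, so that powers in [dual_rlgroup G] and in [G] are convertible. *)
Fixpoint npow (x : G) (n : nat) : G :=
  match n with O => one G | S n => npow x n ⋅ x end.
End Power.
Arguments npow {G} x n.

Section Group.
Context {G : rlgroup}.
Local Notation e := (one G).
Implicit Types x y z u : G.

Lemma mulgK x y : x ⋅ y ⋅ y⁻¹ = x.
Proof. rewrite <- mulA, mulgV, mulg1. reflexivity. Qed.
Lemma mulgKV x y : x ⋅ y⁻¹ ⋅ y = x.
Proof. rewrite <- mulA, mulVg, mulg1. reflexivity. Qed.
Lemma mulKg x y : x⁻¹ ⋅ (x ⋅ y) = y.
Proof. rewrite mulA, mulVg, mul1g. reflexivity. Qed.
Lemma mulKVg x y : x ⋅ (x⁻¹ ⋅ y) = y.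
Proof. rewrite mulA, mulgV, mul1g. reflexivity. Qed.

Lemma mulIg x y z : x ⋅ z = y ⋅ z -> x = y.
Proof. intro H. rewrite <- (mulgK x z), <- (mulgK y z), H. reflexivity. Qed.
Lemma mulgI x y z : z ⋅ x = z ⋅ y -> x = y.
Proof. intro H. rewrite <- (mulKg z x), <- (mulKg z y), H. reflexivity. Qed.

Lemma invg_of_mul1 x y : x ⋅ y = e -> y = x⁻¹.
Proof. intro H. apply (mulgI _ _ x). rewrite H, mulgV. reflexivity. Qed.
Lemma invgK x : x⁻¹⁻¹ = x.
Proof. symmetry. apply invg_of_mul1, mulVg. Qed.
Lemma invg1 : e⁻¹ = e.
Proof. symmetry. apply invg_of_mul1, mulg1. Qed.
Lemma invMg x y : (x ⋅ y)⁻¹ = y⁻¹ ⋅ x⁻¹.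
Proof.
  symmetry. apply invg_of_mul1.
  rewrite mulA, <- (mulA x y), mulgV, mulg1, mulgV. reflexivity.
Qed.
Lemma invg_eq1 x : x⁻¹ = e -> x = e.
Proof. intro H. rewrite <- (invgK x), H. apply invg1. Qed.

Lemma le_mul2r x y z : x ⋅ z ≤ y ⋅ z -> x ≤ y.
Proof. intro H. rewrite <- (mulgK x z), <- (mulgK y z). apply le_mulr, H. Qed.
Lemma le_mul1l x y : x ≤ e -> x ⋅ y ≤ y.
Proof. intro H. rewrite <- (mul1g y) at 2. apply le_mulr, H. Qed.
Lemma mul_le1 x y : x ≤ e -> y ≤ e -> x ⋅ y ≤ e.
Proof. intros Hx Hy. apply le_trans with y; auto. apply le_mul1l, Hx. Qed.
Lemma invg_le1 z : e ≤ z -> z⁻¹ ≤ e.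
Proof. intro H. apply (le_mul2r _ _ z). rewrite mulVg, mul1g. exact H. Qed.
Lemma invg_ge1 z : z ≤ e -> e ≤ z⁻¹.
Proof. intro H. apply (le_mul2r _ _ z). rewrite mulVg, mul1g. exact H. Qed.

Lemma join_eqr x y : x ≤ y -> x ⊔ y = y.
Proof. intro H. apply le_antisym. apply join_lub; auto using le_refl. apply join_r. Qed.
Lemma join_eql x y : y ≤ x -> x ⊔ y = x.
Proof. intro H. apply le_antisym. apply join_lub; auto using le_refl. apply join_l. Qed.
Lemma joinC x y : x ⊔ y = y ⊔ x.
Proof. apply le_antisym; apply join_lub; auto using join_l, join_r. Qed.

Lemma join_mulr x y z : (x ⊔ y) ⋅ z = x ⋅ z ⊔ y ⋅ z.
Proof.
  apply le_antisym.
  - apply (le_mul2r _ _ z⁻¹). rewrite mulgK. apply join_lub.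
    + rewrite <- (mulgK x z) at 1. apply le_mulr, join_l.
    + rewrite <- (mulgK y z) at 1. apply le_mulr, join_r.
  - apply join_lub; apply le_mulr; auto using join_l, join_r.
Qed.

Lemma lprod_app (l1 l2 : list G) : lprod G (l1 ++ l2) = lprod G l1 ⋅ lprod G l2.
Proof. induction l1; simpl. - rewrite mul1g; auto. - rewrite IHl1, mulA; auto. Qed.
Lemma lprod_rev_cons x l : lprod G (rev (x :: l)) = lprod G (rev l) ⋅ x.
Proof. simpl. rewrite lprod_app. simpl. rewrite mulg1. reflexivity. Qed.
Lemma lprod_rev_map_inv (l : list G) : lprod G (rev (map (inv G) l)) = (lprod G l)⁻¹.
Proof.
  induction l; simpl. - symmetry; apply invg1.
  - rewrite lprod_app, IHl. simpl. rewrite mulg1, invMg. reflexivity.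
Qed.

Lemma npow_mulC x n : x ⋅ npow x n = npow x n ⋅ x.
Proof.
  induction n; simpl.
  - rewrite mul1g, mulg1. reflexivity.
  - rewrite mulA, IHn. reflexivity.
Qed.
Lemma inv_npow x n : (npow x n)⁻¹ = npow x⁻¹ n.
Proof.
  induction n; simpl.
  - apply invg1.
  - rewrite invMg, IHn, <- npow_mulC. reflexivity.
Qed.
End Group.

Section Dual.
Context {G : rlgroup}.
Implicit Types x y z : G.

Lemma meet_eql x y : x ≤ y -> x ⊓ y = x.
Proof. exact (@join_eql (dual_rlgroup G) x y). Qed.
Lemma meetC x y : x ⊓ y = y ⊓ x.
Proof. exact (@joinC (dual_rlgroup G) x y). Qed.
End Dual.

Section LeftTranslation.
Context {G : rlgroup}.
Implicit Types x y z u : G.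

Definition ldistr (op : G -> G -> G) u : Prop := forall x y, u ⋅ op x y = op (u ⋅ x) (u ⋅ y).
Definition lmono u : Prop := forall x y, x ≤ y -> u ⋅ x ≤ u ⋅ y.

Lemma ldistr_inv {op u} : ldistr op u -> ldistr op u⁻¹.
Proof.
  intros Hu x y. rewrite <- (mulKVg u x) at 1. rewrite <- (mulKVg u y) at 1.
  rewrite <- Hu, mulKg. reflexivity.
Qed.

Lemma ldistr_npow {op u} : ldistr op u -> forall n, ldistr op (npow u n).
Proof.
  intros Hu n. induction n; intros x y; simpl.
  - rewrite !mul1g. reflexivity.
  - rewrite <- !mulA, Hu, IHn. reflexivity.
Qed.

Lemma ldistr_join_mono {u} : ldistr (join G) u -> lmono u.
Proof. intros Hu x y H. rewrite <- (join_eqr _ _ H), Hu. apply join_l. Qed.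

Lemma le_invg_swap u z : lmono u -> u⁻¹ ≤ z -> z⁻¹ ≤ u.
Proof.
  intros Hu H. apply Hu in H. rewrite mulgV in H.
  apply (le_mulr _ _ z⁻¹) in H. rewrite mul1g, mulgK in H. exact H.
Qed.

Lemma le_invg_anti u z : lmono u⁻¹ -> z ≤ u -> u⁻¹ ≤ z⁻¹.
Proof.
  intros Hu H. apply Hu in H. rewrite mulVg in H.
  apply (le_mulr _ _ z⁻¹) in H. rewrite mul1g, mulgK in H. exact H.
Qed.
End LeftTranslation.

Section RightNormal.
Context {G : rlgroup}.
Local Notation e := (one G).
Implicit Types x y z a b h : G.
Variable s : G.
Hypothesis s_ge1 : e ≤ s.
Hypothesis s_join : ldistr (join G) s.

Let s_mono : lmono s := ldistr_join_mono s_join.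
Let sV_join : ldistr (join G) s⁻¹ := ldistr_inv s_join.
Let sV_mono : lmono s⁻¹ := ldistr_join_mono sV_join.

Lemma npow_sV_le1 j : npow s⁻¹ j ≤ e.
Proof.
  induction j; simpl. - apply le_refl.
  - apply mul_le1; auto. apply invg_le1, s_ge1.
Qed.

Lemma sV_le_of_mul h a : s⁻¹ ≤ h ⋅ a -> a ≤ e -> s⁻¹ ≤ h.
Proof.
  intros H Ha. apply s_mono in H. rewrite mulgV, mulA in H.
  apply (le_mulr _ _ a⁻¹) in H. rewrite mulgK, mul1g in H.
  apply (le_trans _ _ _ (invg_ge1 _ Ha)), sV_mono in H.
  rewrite mulKg, mulg1 in H. exact H.
Qed.

Lemma join_npow_sV_S x j : x ≤ e ->
  x ⊔ npow s⁻¹ (S j) = (x ⋅ (x ⊔ s⁻¹)⁻¹ ⊔ npow s⁻¹ j) ⋅ (x ⊔ s⁻¹).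
Proof.
  intro Hx. set (r := x ⊔ s⁻¹). set (y := x ⋅ r⁻¹).
  assert (Hyr : y ⋅ r = x) by apply mulgKV.
  assert (Hyc : y ⊔ s⁻¹ ⋅ r⁻¹ = e).
  { apply (mulIg _ _ r). rewrite join_mulr, Hyr, mulgKV, mul1g. reflexivity. }
  rewrite join_mulr, Hyr. apply le_antisym; apply join_lub; try apply join_l.
  - apply le_trans with (npow s⁻¹ j ⋅ r); [|apply join_r].
    apply (ldistr_join_mono (ldistr_npow sV_join j)), join_r.
  - apply (le_mul2r _ _ r⁻¹). rewrite mulgK, join_mulr. fold y. simpl.
    rewrite <- mulA, <- (mulg1 (npow s⁻¹ j)) at 1.
    rewrite <- Hyc, (ldistr_npow sV_join j).
    apply join_lub; [|apply join_r].
    apply le_trans with y; [|apply join_l]. apply le_mul1l, npow_sV_le1.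
Qed.

Definition rnormal_pair a b : Prop :=
  ~ exists h h', negcone h /\ negcone h' /\ h <> e /\ h' ⋅ h = b /\
                in_unit_interval G s (h ⋅ a).

Inductive rnormal : list G -> Prop :=
  | rnormal_nil : rnormal []
  | rnormal_one a : in_unit_interval G s a -> rnormal [a]
  | rnormal_cons a b l : in_unit_interval G s a -> rnormal_pair a b ->
      rnormal (b :: l) -> rnormal (a :: b :: l).

Lemma right_normal_rnormal g gs : right_normal s g gs -> rnormal gs.
Proof.
  intros [Hunit [_ Hpair]]. clear g.
  induction gs as [|a [|b l] IH]; constructor.
  - now inversion Hunit.
  - now inversion Hunit.
  - apply (Hpair 0). simpl. lia.
  - apply IH. { now inversion Hunit. }
    intros i Hi. apply (Hpair (S i)). simpl in *. lia.
Qed.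

Lemma rnormal_tail a l : rnormal (a :: l) -> rnormal l.
Proof. intro H. inversion H; subst; auto. constructor. Qed.

Lemma rnormal_prod_le1 l : rnormal l -> lprod G (rev l) ≤ e.
Proof.
  induction 1.
  - apply le_refl.
  - simpl. rewrite mulg1. apply H.
  - rewrite lprod_rev_cons. apply mul_le1; auto. apply H.
Qed.

Lemma rnormal_pair_absorb a b h : a ≤ e -> rnormal_pair a b ->
  h ≤ e -> b ≤ h -> s⁻¹ ≤ h ⋅ a -> h = e.
Proof.
  intros Ha Hab Hh Hbh Hha. apply NNPP. intro Hne. apply Hab.
  exists h, (b ⋅ h⁻¹). repeat split; auto.
  - apply (le_mul2r _ _ h). rewrite mulgKV, mul1g. exact Hbh.
  - apply mulgKV.
  - apply le_trans with a; auto. apply le_mul1l, Hh.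
Qed.

Lemma rnormal_head a l : rnormal (a :: l) -> lprod G (rev (a :: l)) ⊔ s⁻¹ = a.
Proof.
  revert a. induction l as [|b l IH]; intros a H.
  - simpl. rewrite mulg1. apply join_eql. inversion H as [|a0 [Ha _] |]. exact Ha.
  - inversion H as [| |a0 b0 l0 [Hsa Hae] Hab Hb]; subst.
    rewrite lprod_rev_cons. set (y := lprod G (rev (b :: l))).
    set (h := (y ⋅ a ⊔ s⁻¹) ⋅ a⁻¹).
    assert (Hha : h ⋅ a = y ⋅ a ⊔ s⁻¹) by apply mulgKV.
    assert (Hh : h ≤ e).
    { apply (le_mul2r _ _ a). rewrite Hha, mul1g. apply join_lub; auto.
      apply le_mul1l, rnormal_prod_le1, Hb. }
    assert (Hsh : s⁻¹ ≤ h) by (apply (sV_le_of_mul h a); auto; rewrite Hha; apply join_r).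
    assert (Hyh : y ≤ h) by (apply (le_mul2r _ _ a); rewrite Hha; apply join_l).
    assert (Hbh : b ≤ h) by (rewrite <- (IH b Hb); apply join_lub; auto).
    rewrite <- Hha, (rnormal_pair_absorb a b h); auto.
    + apply mul1g.
    + rewrite Hha. apply join_r.
Qed.

Lemma rnormal_join_npow l : rnormal l ->
  forall j, lprod G (rev l) ⊔ npow s⁻¹ j = lprod G (rev (firstn j l)).
Proof.
  induction l as [|a l IH]; intros H j.
  - rewrite firstn_nil. apply join_eql, npow_sV_le1.
  - destruct j as [|j].
    + apply join_eqr, rnormal_prod_le1, H.
    + rewrite join_npow_sV_S, rnormal_head by (auto using rnormal_prod_le1).
      rewrite lprod_rev_cons, mulgK, IH by (exact (rnormal_tail _ _ H)).
      simpl firstn. rewrite lprod_rev_cons. reflexivity.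
Qed.

Lemma right_normal_join_npow g gs : right_normal s g gs ->
  forall j, g ⊔ npow s⁻¹ j = lprod G (rev (firstn j gs)).
Proof.
  intros Hg. pose proof (right_normal_rnormal _ _ Hg) as Hgs.
  destruct Hg as [_ [-> _]]. exact (rnormal_join_npow _ Hgs).
Qed.
End RightNormal.

Lemma nth_map_inv {G : rlgroup} (l : list G) i :
  nth i (map (inv G) l) (one G) = (nth i l (one G))⁻¹.
Proof. rewrite <- invg1 at 1. apply map_nth. Qed.

Section LeftNormal.
Context {G : rlgroup}.
Local Notation e := (one G).
Variable s : G.
Hypothesis s_ge1 : e ≤ s.
Hypothesis s_join : ldistr (join G) s.
Hypothesis s_meet : ldistr (meet G) s.

Lemma left_normal_dual (g : G) hs : left_normal s g hs ->
  @right_normal (dual_rlgroup G) (inv G s) (inv G g) (map (inv G) hs).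
Proof.
  pose proof (ldistr_join_mono s_join) as s_mono.
  pose proof (ldistr_join_mono (ldistr_inv s_join)) as sV_mono.
  intros [Hunit [Hprod Hpair]].
  unfold right_normal, in_unit_interval, negcone; cbn.
  change (lprod (dual_rlgroup G)) with (lprod G). split; [|split].
  - rewrite Forall_forall in *. intros a Ha. apply in_map_iff in Ha as [h [<- Hh]].
    destruct (Hunit h Hh) as [[Hsh Hh'] Hne]. split; [split|].
    + rewrite invgK. apply le_invg_swap; auto.
    + apply invg_ge1, Hh'.
    + intro E. apply Hne, invg_eq1, E.
  - rewrite Hprod. symmetry. apply lprod_rev_map_inv.
  - intros i Hi [u [u' [Hu [Hu' [Hne [Hprod' [Hhi Hlo]]]]]]].
    rewrite length_map in Hi. rewrite !nth_map_inv, invgK in *.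
    apply (Hpair i Hi). exists u⁻¹, u'⁻¹.
    assert (Hinv : nth i hs e ⋅ u⁻¹ = (u ⋅ (nth i hs e)⁻¹)⁻¹)
      by (rewrite invMg, invgK; reflexivity).
    repeat split; try apply invg_le1; auto.
    + intro E. apply Hne, invg_eq1, E.
    + rewrite <- invMg, Hprod'. apply invgK.
    + rewrite Hinv. apply le_invg_anti; auto.
    + rewrite Hinv. apply invg_le1, Hlo.
Qed.

Lemma left_normal_meet_npow g hs : left_normal s g hs ->
  forall j, g⁻¹ ⊓ npow s j = (lprod G (firstn j hs))⁻¹.
Proof.
  intros Hg j.
  pose proof (@right_normal_join_npow (dual_rlgroup G) (inv G s) (invg_le1 _ s_ge1)
                (ldistr_inv s_meet) _ _ (left_normal_dual g hs Hg) j) as H.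
  change (g⁻¹ ⊓ npow s⁻¹⁻¹ j = lprod G (rev (firstn j (map (inv G) hs)))) in H.
  rewrite invgK, firstn_map, lprod_rev_map_inv in H. exact H.
Qed.
End LeftNormal.

Lemma chain_condition_extremal {T : Type} (r : T -> T -> Prop) (B : T -> Prop) :
  (forall f : nat -> T, (forall n, B (f n)) -> (forall n, r (f (S n)) (f n)) ->
     exists N, forall n, (N <= n)%nat -> f n = f N) ->
  forall P : T -> Prop, (forall v, P v -> B v) -> forall v0, P v0 ->
  exists m, P m /\ forall v, P v -> r v m -> v = m.
Proof.
  intros Hc P HB v0 Hv0. apply NNPP; intro Hno.
  assert (Hstep : forall m : {v | P v}, {v' : {v | P v} |
            r (proj1_sig v') (proj1_sig m) /\ proj1_sig v' <> proj1_sig m}).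
  { intros [m Hm]. apply constructive_indefinite_description.
    apply NNPP; intro H2. apply Hno. exists m; split; auto.
    intros v Hv Hr. apply NNPP; intro Hne. apply H2.
    exists (exist _ v Hv). simpl. auto. }
  set (it := fix it (n : nat) : {v | P v} :=
          match n with O => exist _ v0 Hv0 | S n => proj1_sig (Hstep (it n)) end).
  destruct (Hc (fun n => proj1_sig (it n))) as [N HN].
  - intro n. apply HB, proj2_sig.
  - intro n. apply (proj2_sig (Hstep (it n))).
  - apply (proj2 (proj2_sig (Hstep (it N)))), (HN (S N)). lia.
Qed.

Section Noetherian.
Context {G : rlgroup}.
Hypothesis noeth : noetherian G.
Implicit Types t v x : G.

Definition covers t v : Prop := t ≤ v /\ t <> v /\ forall w, t ≤ w -> w ≤ v -> w = t \/ w = v.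

Lemma exists_covers_le t x : t ≤ x -> t <> x -> exists c, covers t c /\ c ≤ x.
Proof.
  intros Htx Hne.
  destruct (chain_condition_extremal (fun v m => v ≤ m) (fun v => t ≤ v) (proj1 (noeth t))
              (fun v => t ≤ v /\ v ≤ x /\ v <> t) (fun v H => proj1 H) x
              (conj Htx (conj (le_refl x) (fun E => Hne (eq_sym E)))))
    as [c [[Htc [Hcx Hct]] Hmin]].
  exists c. split; auto. split; [|split]; auto.
  intros w Htw Hwc. destruct (classic (w = t)) as [E|E]; auto.
  right. apply Hmin; auto. split; auto. split; auto. apply le_trans with c; auto.
Qed.

Lemma le_downward_ind x (P : G -> Prop) :
  (forall t, t ≤ x -> (forall v, t ≤ v -> v ≤ x -> v <> t -> P v) -> P t) ->
  forall t, t ≤ x -> P t.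
Proof.
  intros Hstep t Htx. apply NNPP; intro Hnt.
  destruct (chain_condition_extremal (fun v m => m ≤ v) (fun v => v ≤ x) (proj2 (noeth x))
              (fun t => t ≤ x /\ ~ P t) (fun v H => proj1 H) t (conj Htx Hnt))
    as [m [[Hmx Hnm] Hmax]].
  apply Hnm, Hstep; auto. intros v Hmv Hvx Hne.
  apply NNPP; intro Hnv. apply Hne, Hmax; auto.
Qed.
End Noetherian.

Section Modular.
Context {G : rlgroup}.
Hypothesis modG : modular G.
Implicit Types t m v x y : G.

(* Modularity: [u ↦ u ⊔ y] is an isomorphism from [[x ⊓ y, x]] onto [[y, x ⊔ y]],
   with inverse [v ↦ v ⊓ x]. *)
Lemma covers_join x y t m : x ⊓ y ≤ t -> m ≤ x -> covers t m -> covers (t ⊔ y) (m ⊔ y).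
Proof.
  intros Ht Hm [Htm [Hne Hcov]].
  assert (Htx : t ≤ x) by (apply le_trans with m; auto).
  assert (Kx : forall u, x ⊓ y ≤ u -> u ≤ x -> (u ⊔ y) ⊓ x = u).
  { intros u Hu1 Hu2. rewrite <- (modG u y x Hu2). apply join_eql.
    rewrite meetC. exact Hu1. }
  assert (Ky : forall v, y ≤ v -> v ≤ x ⊔ y -> (v ⊓ x) ⊔ y = v).
  { intros v Hv1 Hv2. rewrite joinC, meetC, (modG y x v Hv1), joinC, meetC.
    apply meet_eql. exact Hv2. }
  split; [|split].
  - apply join_lub; [apply le_trans with m; auto|]; auto using join_l, join_r.
  - intro E. apply Hne. rewrite <- (Kx t), <- (Kx m), E; auto.
    apply le_trans with t; auto.
  - intros v Hv1 Hv2.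
    assert (Hy : y ≤ v) by (apply le_trans with (t ⊔ y); auto; apply join_r).
    assert (Hvx : v ≤ x ⊔ y).
    { apply le_trans with (m ⊔ y); auto.
      apply join_lub; [apply le_trans with x; auto|]; auto using join_l, join_r. }
    destruct (Hcov (v ⊓ x)) as [E|E].
    + rewrite <- (Kx t) by auto. apply meet_glb; [|apply meet_r].
      apply le_trans with (t ⊔ y); auto. apply meet_l.
    + rewrite <- (Kx m) by (auto; apply le_trans with t; auto).
      apply meet_glb; [apply le_trans with v; auto; apply meet_l | apply meet_r].
    + left. rewrite <- (Ky v), E; auto.
    + right. rewrite <- (Ky v), E; auto.
Qed.
End Modular.

Section Degree.
Context {G : rlgroup}.
Local Notation e := (one G).
Implicit Types a b g t u x y : G.
Variable deg : G -> Z.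
Hypothesis deg_mul : forall x y, deg (x ⋅ y) = (deg x + deg y)%Z.

Lemma deg_one : deg e = 0%Z.
Proof. pose proof (deg_mul e e) as H. rewrite mulg1 in H. lia. Qed.

Lemma deg_inv x : deg x⁻¹ = (- deg x)%Z.
Proof. pose proof (deg_mul x x⁻¹) as H. rewrite mulgV, deg_one in H. lia. Qed.

Lemma deg_lprod_rev (l : list G) : deg (lprod G (rev l)) = deg (lprod G l).
Proof.
  induction l as [|a l IH]; auto.
  rewrite lprod_rev_cons. simpl. rewrite !deg_mul, IH. lia.
Qed.

Lemma deg_nth_of_prefix (l1 l2 : list G) : length l1 = length l2 ->
  (forall j, deg (lprod G (firstn j l1)) = deg (lprod G (firstn j l2))) ->
  forall i, deg (nth i l1 e) = deg (nth i l2 e).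
Proof.
  revert l2. induction l1 as [|a l1 IH]; intros [|b l2] Hlen Hpre i;
    simpl in *; try discriminate; auto.
  assert (Hab : deg a = deg b).
  { specialize (Hpre 1%nat). simpl in Hpre. rewrite !deg_mul, deg_one in Hpre. lia. }
  destruct i; auto. apply IH; [lia|].
  intro j. specialize (Hpre (S j)). simpl in Hpre. rewrite !deg_mul in Hpre. lia.
Qed.

Hypothesis deg_atom : forall a, covered_by_e G a -> deg a = 1%Z.
Hypothesis modG : modular G.
Hypothesis noeth : noetherian G.

Lemma deg_covers a b : covers a b -> deg a = (deg b + 1)%Z.
Proof.
  intros [Hab [Hne Hcov]].
  assert (Hatom : covered_by_e G (a ⋅ b⁻¹)).
  { split; [|split].
    - rewrite <- (mulgV b). apply le_mulr, Hab.
    - intro E. apply Hne, (mulIg _ _ b⁻¹). rewrite E, mulgV. reflexivity.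
    - intros x Hx1 Hx2. destruct (Hcov (x ⋅ b)) as [E|E].
      + rewrite <- (mulgKV a b). apply le_mulr, Hx1.
      + apply le_mul1l, Hx2.
      + left. rewrite <- E, mulgK. reflexivity.
      + right. apply (mulIg _ _ b). rewrite mul1g. exact E. }
  pose proof (deg_atom _ Hatom) as H. rewrite deg_mul, deg_inv in H. lia.
Qed.

(* Going down a maximal chain from [x] to [x ⊓ y], each covering step is transported
   to a covering step from [x ⊔ y] to [y]. *)
Lemma deg_meet_join x y : (deg (x ⊓ y) + deg (x ⊔ y) = deg x + deg y)%Z.
Proof.
  set (Q := fun t => (deg t - deg x = deg (t ⊔ y) - deg (x ⊔ y))%Z).
  assert (HQ : forall t, t ≤ x -> x ⊓ y ≤ t -> Q t).
  { apply (le_downward_ind noeth x (fun t => x ⊓ y ≤ t -> Q t)).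
    intros t Htx IH Hmt. destruct (classic (t = x)) as [->|Hne]; [unfold Q; lia|].
    destruct (exists_covers_le noeth _ _ Htx Hne) as [c [Htc Hcx]].
    assert (Hc : Q c).
    { apply IH; auto; [apply Htc| |apply le_trans with t; auto; apply Htc].
      intro E. apply (proj1 (proj2 Htc)). auto. }
    pose proof (deg_covers _ _ Htc).
    pose proof (deg_covers _ _ (covers_join modG x y t c Hmt Hcx Htc)).
    unfold Q in *. lia. }
  specialize (HQ (x ⊓ y) (meet_l x y) (le_refl _)). unfold Q in HQ.
  rewrite (join_eqr _ _ (meet_r x y)) in HQ. lia.
Qed.

(* Apply the valuation identity to [e] and [u ⋅ g⁻¹], then translate back. *)
Lemma deg_join_meet_inv u g : ldistr (meet G) u ->
  (deg (g ⊔ u) + deg (g⁻¹ ⊓ u⁻¹) = 0)%Z.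
Proof.
  intro Hu. set (z := u ⋅ g⁻¹).
  assert (E1 : (g ⊔ u) ⋅ g⁻¹ = z ⊔ e) by (rewrite join_mulr, mulgV, joinC; reflexivity).
  assert (E2 : u ⋅ (g⁻¹ ⊓ u⁻¹) = z ⊓ e) by (rewrite Hu, mulgV; reflexivity).
  apply (f_equal deg) in E1, E2. pose proof (deg_meet_join z e) as V.
  unfold z in *. rewrite !deg_mul, !deg_inv, deg_one in *. lia.
Qed.
End Degree.

Lemma is_degree_atom {G : rlgroup} (deg : G -> Z) : is_degree deg ->
  forall a, covered_by_e G a -> deg a = 1%Z.
Proof.
  intros [_ Hlist] a Ha. pose proof (Hlist [a] (Forall_cons _ Ha (Forall_nil _))) as H.
  simpl in H. rewrite mulg1 in H. exact H.
Qed.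

Theorem mainTheorem6 (G : rlgroup) (s : G) (deg : G -> Z) (g : G)
  (k : nat) (gs hs : list G) :
  modular G -> noetherian G -> strong_order_unit s -> is_degree deg ->
  negcone g ->
  right_normal s g gs -> left_normal s g hs ->
  length gs = k -> length hs = k ->
  forall i : nat, (i < k)%nat -> deg (nth i hs (one G)) = deg (nth i gs (one G)).
Proof.
  intros modG noeth [[s_ge1 _] [s_meet [s_join _]]] Hdeg _ Hgs Hhs Hk1 Hk2 i _.
  pose proof (proj1 Hdeg) as deg_mul.
  apply (deg_nth_of_prefix deg deg_mul); [lia|]. intro j.
  pose proof (deg_join_meet_inv deg deg_mul (is_degree_atom deg Hdeg) modG noeth
                (npow s⁻¹ j) g (ldistr_npow (ldistr_inv s_meet) j)) as H.
  rewrite (right_normal_join_npow s s_ge1 s_join g gs Hgs j) in H.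
  rewrite inv_npow, invgK, (left_normal_meet_npow s s_ge1 s_join s_meet g hs Hhs j) in H.
  rewrite deg_inv, deg_lprod_rev in H by exact deg_mul. lia.
Qed.
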